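(* For all $n\ge3$ and $s\ge0$, $$\mathbf{Sf}_{n,3}(p,1)\big|_{p^s}=\binom{n-1}{s+2},$$ and for all $n\ge4$ and $s\ge0$, $$\mathbf{Sf}_{n,4}(p,1)\big|_{p^s}=(2^{s+1}-1)\binom{n-1}{s+3}.$$
   Context: $F_1(p,q)=q$, $F_2(p,q)=q^2$ and $F_m(p,q)=qF_{m-1}(p,q)+pF_{m-2}(p,q)$ for $m\ge3$. Let $(x)_{\downarrow_{F,p,q,0}}=1$ and $(x)_{\downarrow_{F,p,q,k}}=x(x-F_1(p,q))\cdots(x-F_{k-1}(p,q))$ for $k\ge1$. Define the polynomials $\mathbf{Sf}_{n,k}(p,q)$ for $0\le k\le n$ by $x^n=\sum_{k=0}^n\mathbf{Sf}_{n,k}(p,q)(x)_{\downarrow_{F,p,q,k}}$. $\mathbf{Sf}_{n,k}(p,1)$ is the specialization $q=1$, and $f|_{p^s}$ denotes the coefficient of $p^s$ in the polynomial $f$ in $p$. *)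

From mathcomp Require Import all_boot all_order all_algebra.
Set Implicit Arguments. Unset Strict Implicit. Unset Printing Implicit Defensive.
Import GRing.Theory.
Local Open Scope ring_scope.

Definition Rp := {poly int}.
(* Polynomials in q with coefficients in Z[p], i.e. Z[p][q]. *)
Definition Rpq := {poly {poly int}}.
(* Polynomials in x with coefficients in Z[p,q]. *)
Definition Rpqx := {poly {poly {poly int}}}.

Definition pvar : Rpq := ('X : {poly int})%:P.
Definition qvar : Rpq := 'X.

(* F_0 := 0 (convention, so that (x)_k = prod_{i<k} (x - F_i)),
   F_1 = q, F_2 = q^2, F_m = q F_{m-1} + p F_{m-2} for m >= 3. *)
Fixpoint Fpq (m : nat) : Rpq :=
  match m with
  | 0 => 0
  | 1 => qvar
  | m1.+1 => match m1 with
             | 0 => qvar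
             | 1 => qvar ^+ 2
             | m2.+1 => qvar * Fpq m1 + pvar * Fpq m2
             end
  end.

Definition ffall (k : nat) : Rpqx := \prod_(i < k) ('X - (Fpq i)%:P).

Definition is_Sf (Sf : nat -> nat -> Rpq) : Prop :=
  forall n : nat, ('X ^+ n : Rpqx) = \sum_(k < n.+1) (Sf n k)%:P * ffall k.

Definition at_q1 (f : Rpq) : Rp := f.[1].

(* Comparing coefficients of x^(n+1) = x * x^n in the basis (x)_k, using
   x * (x)_k = (x)_(k+1) + F_k (x)_k, gives the triangle recurrence
   Sf(n+1, k) = Sf(n, k-1) + F_k Sf(n, k).  At q = 1 the relevant F_k are
   1, 1, 1 + p and 1 + 2p, so the columns k = 0, ..., 4 are computed one from
   the next by induction on n; the coefficient of p^s then obeys a Pascal-type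
   recurrence that is solved by the stated binomial expressions. *)
From mathcomp Require Import all_boot all_order all_algebra.
From mathcomp Require Import ring zify.
Import GRing.Theory.
Local Open Scope ring_scope.

Section MonicBasis.
Context {R : nzRingType} {b : nat -> {poly R}}.
Hypotheses (b_monic : forall k, b k \is monic) (size_b : forall k, size (b k) = k.+1).

Lemma coef_sum_monic_basis_top (a : nat -> R) m :
  (\sum_(k < m.+1) a k *: b k)`_m = a m.
Proof.
rewrite big_ord_recr /= coefD coef_sum big1 ?add0r.
  by rewrite coefZ -[m in _`_m]/(m.+1.-1) -size_b -lead_coefE (monicP (b_monic m)) mulr1.
by move=> i _; rewrite coefZ nth_default ?mulr0 // size_b.
Qed.

Lemma monic_basis_coef_inj m (a c : nat -> R) :
  \sum_(k < m) a k *: b k = \sum_(k < m) c k *: b k ->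
  forall k, (k < m)%N -> a k = c k.
Proof.
elim: m => [//|m IHm] E k.
have Em : a m = c m by rewrite -(coef_sum_monic_basis_top a) -(coef_sum_monic_basis_top c) E.
move: E; rewrite !big_ord_recr /= Em => /addIr E.
by rewrite ltnS leq_eqVlt => /predU1P[->|]; last exact: IHm.
Qed.

End MonicBasis.

Lemma ffallS k : ffall k.+1 = ffall k * ('X - (Fpq k)%:P).
Proof. by rewrite /ffall big_ord_recr. Qed.

Lemma ffall_monic k : ffall k \is monic.
Proof. exact: monic_prod_XsubC. Qed.

Lemma size_ffall k : size (ffall k) = k.+1.
Proof. by rewrite /ffall size_prod_XsubC /index_enum /= -enumT size_enum_ord. Qed.

Lemma mulX_ffall k : 'X * ffall k = ffall k.+1 + Fpq k *: ffall k.
Proof.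
by rewrite ffallS -mul_polyC mulrBr [(Fpq k)%:P * _]mulrC subrK mulrC.
Qed.

Lemma mulX_sum_ffall m (a : nat -> Rpq) : a m.+1 = 0 ->
  'X * \sum_(k < m.+1) a k *: ffall k =
  \sum_(k < m.+2) ((if (k : nat) is k'.+1 then a k' else 0) + a k * Fpq k) *: ffall k.
Proof.
move=> am0; under [RHS]eq_bigr do rewrite scalerDl.
rewrite big_split /= [X in _ = X + _]big_ord_recl scale0r add0r.
rewrite [X in _ = _ + X]big_ord_recr /= am0 mul0r scale0r addr0.
rewrite mulr_sumr -big_split /=; apply: eq_bigr => k _.
by rewrite -scalerAr mulX_ffall scalerDr scalerA mulrC.
Qed.

Lemma Fpq1_at_q1 : at_q1 (Fpq 1) = 1.
Proof. exact: hornerX. Qed.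

Lemma Fpq2_at_q1 : at_q1 (Fpq 2) = 1.
Proof. by rewrite /at_q1 /= /qvar hornerXn expr1n. Qed.

Lemma Fpq3_at_q1 : at_q1 (Fpq 3) = 1 + 'X.
Proof. by rewrite /at_q1 /= /qvar /pvar !hornerE expr1n. Qed.

Lemma Fpq4_at_q1 : at_q1 (Fpq 4) = 1 + 'X + 'X.
Proof. by rewrite /at_q1 /= /qvar /pvar !hornerE ?expr1n /= !mulr1. Qed.

Section TriangleRecurrence.
Variable Sf : nat -> nat -> Rpq.
Hypothesis HSf : is_Sf Sf.

(* [Sf n k] is only specified for [k <= n]; [Sfz] extends it by zero. *)
Definition Sfz n k : Rpq := if (k <= n)%N then Sf n k else 0.

Lemma Sfz_expansion n : ('X ^+ n : Rpqx) = \sum_(k < n.+1) Sfz n k *: ffall k.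
Proof.
rewrite HSf; apply: eq_bigr => k _.
by rewrite /Sfz -ltnS ltn_ord mul_polyC.
Qed.

Lemma Sfz_rec n k :
  Sfz n.+1 k = (if k is k'.+1 then Sfz n k' else 0) + Sfz n k * Fpq k.
Proof.
have [kn2 | ] := ltnP k n.+2.
  have Sfz_out : Sfz n n.+1 = 0 by rewrite /Sfz ltnn.
  apply: (monic_basis_coef_inj ffall_monic size_ffall _ (Sfz n.+1)
    (fun k => (if k is k'.+1 then Sfz n k' else 0) + Sfz n k * Fpq k) _ k kn2).
  by rewrite -Sfz_expansion exprS Sfz_expansion mulX_sum_ffall.
case: k => [//|k] nk.
by rewrite /Sfz !ifF ?mul0r ?addr0 //; apply/negbTE; rewrite -ltnNge // ltnW.
Qed.

Lemma Sfz00 : Sfz 0 0 = 1.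
Proof.
have := HSf 0; rewrite big_ord1 /ffall big_ord0 mulr1 expr0 -polyC1.
by move/polyC_inj.
Qed.

Definition Sf1 n k : Rp := at_q1 (Sfz n k).

Lemma Sf1_rec n k :
  Sf1 n.+1 k = (if k is k'.+1 then Sf1 n k' else 0) + Sf1 n k * at_q1 (Fpq k).
Proof. by rewrite /Sf1 /at_q1 Sfz_rec hornerD hornerM; case: k => [|k]; rewrite ?horner0. Qed.

Lemma Sf1_0S k : Sf1 0 k.+1 = 0.
Proof. exact: horner0. Qed.

Lemma Sf1_col0 n : Sf1 n 0 = (n == 0%N)%:R.
Proof.
case: n => [|n]; first by rewrite /Sf1 /at_q1 Sfz00 hornerC.
by rewrite Sf1_rec /at_q1 /= horner0 mulr0 add0r.
Qed.

Lemma Sf1_col1 n : Sf1 n 1 = (0 < n)%N%:R.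
Proof.
elim: n => [|n IHn]; first exact: Sf1_0S.
rewrite Sf1_rec Fpq1_at_q1 mulr1 Sf1_col0 IHn.
by case: n {IHn} => [|n] /=; rewrite ?addr0 ?add0r.
Qed.

Lemma Sf1_col2 n : Sf1 n 2 = n.-1%:R.
Proof.
elim: n => [|n IHn]; first exact: Sf1_0S.
rewrite Sf1_rec Fpq2_at_q1 mulr1 Sf1_col1 IHn.
by case: n {IHn} => [|n] /=; rewrite ?addr0 // -natrD.
Qed.

Lemma coef_Sf1_col3 n s : (Sf1 n 3)`_s = ('C(n.-1, s + 2))%:Z.
Proof.
elim: n s => [|n IHn] s; first by rewrite Sf1_0S coef0 bin0n addn2.
rewrite Sf1_rec Fpq3_at_q1 Sf1_col2 mulrDr mulr1 !coefD coefMX !IHn coefMn coef1.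
case: s => [|s]; case: n {IHn} => [|n] /=; rewrite ?mul0rn ?add0r ?addr0 ?bin0n //.
- by rewrite natz add0n binS bin1; lia.
- by rewrite !addn2.
Qed.

Lemma coef_Sf1_col4 n s : (Sf1 n 4)`_s = ((2 ^ s.+1 - 1) * 'C(n.-1, s + 3))%:Z.
Proof.
elim: n s => [|n IHn] s; first by rewrite Sf1_0S coef0 bin0n addn3 muln0.
rewrite Sf1_rec Fpq4_at_q1 !mulrDr mulr1 !coefD coefMX !IHn coef_Sf1_col3.
case: n {IHn} => [|m] /=.
  by rewrite !bin0n !addn2 !addn3 /= !muln0; case: (s == 0%N); rewrite ?addr0.
case: s => [|t] /=.
  by rewrite !add0n binS /= !mul1n; lia.
have [z Ez] : exists z, (2 ^ t.+1 = z.+1)%N by exists (2 ^ t.+1).-1; rewrite prednK // expn_gt0.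
rewrite !addSn binS expnS Ez -addnS.
have -> : (2 * z.+1 - 1 = (2 * z).+1)%N by lia.
have -> : (z.+1 - 1 = z)%N by lia.
by rewrite -!PoszD; congr Posz; ring.
Qed.

End TriangleRecurrence.

Theorem theorem13 (Sf : nat -> nat -> Rpq) (HSf : is_Sf Sf) :
  (forall n s : nat, (3 <= n)%N ->
     (at_q1 (Sf n 3%N))`_s = ('C(n.-1, s + 2))%:Z) /\
  (forall n s : nat, (4 <= n)%N ->
     (at_q1 (Sf n 4%N))`_s = ((2 ^ s.+1 - 1) * 'C(n.-1, s + 3))%:Z).
Proof.
split=> n s kn.
  by have := coef_Sf1_col3 Sf HSf n s; rewrite /Sf1 /Sfz kn.
by have := coef_Sf1_col4 Sf HSf n s; rewrite /Sf1 /Sfz kn.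
Qed.
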